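(* For each $k\in\mathbb N$, there is a bilabelled graph in $\mathcal P_k$ whose underlying graph is the $k\times k$ grid.
   Context: A $(k,k)$-bilabelled graph is $\boldsymbol F=(F,\boldsymbol u,\boldsymbol v)$, $\boldsymbol u,\boldsymbol v\in V(F)^k$, with underlying graph $F$. Series composition $\boldsymbol F\cdot\boldsymbol F'$: disjoint union with $v_i$ identified with $u'_i$, multiple edges removed, labels $(\boldsymbol u,\boldsymbol v')$. Parallel composition $\boldsymbol F\odot\boldsymbol F'$: identify $u_i$ with $u'_i$, $v_i$ with $v'_i$, multiple edges removed. For $\sigma\in\mathfrak S_{2k}$, $\boldsymbol F^\sigma$ has in-labels $(w_{\sigma(1)},\dots,w_{\sigma(k)})$, out-labels $(w_{\sigma(k+1)},\dots,w_{\sigma(2k)})$, $\boldsymbol w=\boldsymbol u\boldsymbol v$. $\mathscr C_k$ = cyclic group of rotations of $(1,\dots,k,2k,\dots,k+1)$. Bilabelled minors: via edge contraction, edge deletion, deletion of unlabelled vertices. $\boldsymbol C_k$: vertices $[2k]$, in-labels $(1,\dots,k)$, out-labels $(k+1,\dots,2k)$, edges $\{i,i+1\}$ ($i\in[2k]\setminus\{k,2k\}$), $\{1,k+1\},\{k,2k\}$; $\boldsymbol M_k$: same vertices/labels, edges $\{i,i+k\}$. $\mathcal Q_k^P,\mathcal Q_k^S$ = bilabelled minors of $\boldsymbol C_k,\boldsymbol M_k$; $\mathcal Q_k$ their union. $\mathcal P_k$ = smallest class containing $\mathcal Q_k$, closed under series composition, $\boldsymbol F\mapsto\boldsymbol F\odot\boldsymbol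 Q$ ($\boldsymbol Q\in\mathcal Q_k^P$), and $\boldsymbol F\mapsto\boldsymbol F^\sigma$ ($\sigma\in\mathscr C_k$). *)

From mathcomp Require Import all_boot all_order.
Unset Printing Implicit Defensive.

(* A (k,k)-bilabelled graph: a finite vertex type, an edge relation (the
   underlying undirected graph has {x,y} as an edge iff bE x y || bE y x),
   in-labels u and out-labels v. *)
Record bgraph (k : nat) := BGraph {
  bV : finType;
  bE : rel bV;
  bin : 'I_k -> bV;
  bout : 'I_k -> bV }.

Arguments bV {k} _.
Arguments bE {k} _ _ _ : rename.
Arguments bin {k} _ _.
Arguments bout {k} _ _.
Arguments BGraph {k} _ _ _ _.

Definition adj k (F : bgraph k) : rel (bV F) := fun x y => bE F x y || bE F y x.
Arguments adj {k} F x y.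

Definition biso {k} (F H : bgraph k) : Prop :=
  exists f : bV F -> bV H, [/\ bijective f,
    forall x y, adj H (f x) (f y) = adj F x y,
    forall i, bin H i = f (bin F i) & forall i, bout H i = f (bout F i)].

(* H (with map h : V -> V(H)) is the quotient of the (undirected) graph (V, A)
   by the equivalence relation generated by the symmetric relation R, with
   multiple edges removed. *)
Definition quot_of {k} {V : finType} (A R : rel V) {H : bgraph k} (h : V -> bV H) : Prop :=
  [/\ forall p, exists a, h a = p,
      forall a b, (h a == h b) = connect R a b &
      forall p q, adj H p q <-> exists a b, [/\ h a = p, h b = q & A a b || A b a]].

Definition sym_rel {V : Type} (R : rel V) : rel V := fun a b => R a b || R b a.

Definition sum_adj {k} (F F' : bgraph k) : rel (bV F + bV F') :=
  fun a b => match a, b with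
  | inl x, inl y => adj F x y
  | inr x, inr y => adj F' x y
  | _, _ => false end.

Definition is_series {k} (F F' H : bgraph k) : Prop :=
  exists h : bV F + bV F' -> bV H,
    [/\ quot_of (sum_adj F F')
          (sym_rel (fun a b => [exists i : 'I_k, (a == inl (bout F i)) && (b == inr (bin F' i))]))
          h,
        forall i, bin H i = h (inl (bin F i)) &
        forall i, bout H i = h (inr (bout F' i))].

Definition is_parallel {k} (F F' H : bgraph k) : Prop :=
  exists h : bV F + bV F' -> bV H,
    [/\ quot_of (sum_adj F F')
          (sym_rel (fun a b => [exists i : 'I_k,
              ((a == inl (bin F i)) && (b == inr (bin F' i)))
           || ((a == inl (bout F i)) && (b == inr (bout F' i)))]))
          h,
        forall i, bin H i = h (inl (bin F i)) &
        forall i, bout H i = h (inl (bout F i))].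

(* Positions 0..2k-1 of w = u v (0-indexed).  cycpos k lists the cyclic order
   (1,...,k,2k,...,k+1) (1-indexed): index j |-> position; it is an involution. *)
Definition cycpos (k j : nat) : nat := if j < k then j else 3 * k - 1 - j.
(* the rotation by r steps along that cyclic order, as a map on positions *)
Definition rotpos (k r p : nat) : nat := cycpos k ((cycpos k p + r) %% (k + k)).
Definition rot_ord (k r : nat) (p : 'I_(k + k)) : 'I_(k + k) := insubd p (rotpos k r p).

Definition wlab {k} (F : bgraph k) (p : 'I_(k + k)) : bV F :=
  match split p with inl i => bin F i | inr i => bout F i end.

(* F^sigma for sigma the r-th power of the rotation in C_k *)
Definition rot_bg {k} (r : nat) (F : bgraph k) : bgraph k :=
  @BGraph k (bV F) (bE F)
    (fun i => wlab F (rot_ord k r (lshift k i)))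
    (fun i => wlab F (rot_ord k r (rshift k i))).

Definition edge_del {k} (G H : bgraph k) : Prop :=
  exists a b, adj G a b /\ exists h : bV G -> bV H,
    [/\ quot_of (fun x y => adj G x y && ~~ (((x == a) && (y == b)) || ((x == b) && (y == a))))
                (fun _ _ => false) h,
        forall i, bin H i = h (bin G i) & forall i, bout H i = h (bout G i)].

Definition edge_contr {k} (G H : bgraph k) : Prop :=
  exists a b, adj G a b /\ exists h : bV G -> bV H,
    [/\ quot_of (fun x y => adj G x y && ~~ (((x == a) && (y == b)) || ((x == b) && (y == a))))
                (sym_rel (fun x y => (x == a) && (y == b))) h,
        forall i, bin H i = h (bin G i) & forall i, bout H i = h (bout G i)].

Definition vertex_del {k} (G H : bgraph k) : Prop :=
  exists a : bV G, exists f : bV H -> bV G,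
    [/\ injective f, forall p, f p != a, forall x, x != a -> exists p, f p = x,
        forall p q, adj H p q = adj G (f p) (f q) &
        (forall i, bin G i = f (bin H i)) /\ (forall i, bout G i = f (bout H i))].

Inductive bminor {k} (G : bgraph k) : bgraph k -> Prop :=
  | bminor_refl : bminor G G
  | bminor_step H H' : bminor G H ->
      edge_del H H' \/ edge_contr H H' \/ vertex_del H H' -> bminor G H'.

(* C_k and M_k on vertices 'I_(2k) (0-indexed) *)
Definition Cedge (k : nat) : rel 'I_(k + k) := fun x y =>
  [|| (y == x.+1 :> nat) && (x.+1 != k) && (x.+1 != k + k),
      (x == 0 :> nat) && (y == k :> nat)
    | (x == k.-1 :> nat) && (y == (k + k).-1 :> nat)].
Definition Medge (k : nat) : rel 'I_(k + k) := fun x y => y == x + k :> nat.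

Definition C_bg (k : nat) : bgraph k :=
  @BGraph k 'I_(k + k) (Cedge k) (fun i => lshift k i) (fun i => rshift k i).
Definition M_bg (k : nat) : bgraph k :=
  @BGraph k 'I_(k + k) (Medge k) (fun i => lshift k i) (fun i => rshift k i).

Definition QP {k} (Q : bgraph k) : Prop := bminor (C_bg k) Q.
Definition QS {k} (Q : bgraph k) : Prop := bminor (M_bg k) Q.

Inductive Pk {k : nat} : bgraph k -> Prop :=
  | Pk_QP Q : QP Q -> Pk Q
  | Pk_QS Q : QS Q -> Pk Q
  | Pk_series F F' H : Pk F -> Pk F' -> is_series F F' H -> Pk H
  | Pk_par F Q H : Pk F -> QP Q -> is_parallel F Q H -> Pk H
  | Pk_rot F (r : nat) : Pk F -> Pk (rot_bg r F)
  | Pk_iso F H : Pk F -> biso F H -> Pk H.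

Definition grid_adj (k : nat) : rel ('I_k * 'I_k) := fun p q =>
  ((p.1 == q.1) && ((p.2.+1 == q.2 :> nat) || (q.2.+1 == p.2 :> nat)))
  || ((p.2 == q.2) && ((p.1.+1 == q.1 :> nat) || (q.1.+1 == p.1 :> nat))).

Definition underlying_is_grid {k} (F : bgraph k) : Prop :=
  exists f : bV F -> 'I_k * 'I_k, bijective f /\
    forall x y, adj F x y = grid_adj k (f x) (f y).

From mathcomp Require Import all_boot all_order.
From mathcomp Require Import zify.

(* The (n+1) x k grid, with its first row as in-labels and its last row as
   out-labels, is for n = 1 the parallel composition M_k (.) C_k: the cycle C_k
   runs along the two rows and the matching M_k supplies the rungs.  Composing it
   in series with the (n+1) x k grid stacks one more row, so all grids with at
   least two rows lie in P_k, among them the k x k grid when k >= 2.  For k = 1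
   the 1 x 1 grid is C_1 with its only edge contracted; for k = 0 grids are empty. *)

(* Compared at nat so that lia can read it; [grid_adj k] is convertible to
   [grid_rel k k]. *)
Definition grid_rel (n k : nat) : rel ('I_n * 'I_k) := fun p q =>
  ((p.1 == q.1 :> nat) && ((p.2.+1 == q.2 :> nat) || (q.2.+1 == p.2 :> nat)))
  || ((p.2 == q.2 :> nat) && ((p.1.+1 == q.1 :> nat) || (q.1.+1 == p.1 :> nat))).

Lemma grid_rel_sym n k : symmetric (grid_rel n k).
Proof. by move=> p q; apply/idP/idP; rewrite /grid_rel; lia. Qed.

Definition grid_bg (k n : nat) : bgraph k :=
  BGraph ('I_n.+1 * 'I_k)%type (grid_rel n.+1 k) (fun i => (ord0, i)) (fun i => (ord_max, i)).

Lemma adj_grid_bg k n : adj (grid_bg k n) =2 grid_rel n.+1 k.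
Proof. by move=> p q; rewrite /adj /= grid_rel_sym orbb. Qed.

Lemma ord_pair_eq m n (x y : 'I_m * 'I_n) :
  x.1 = y.1 :> nat -> x.2 = y.2 :> nat -> x = y.
Proof. by case: x y => [x1 x2] [y1 y2] /= /val_inj-> /val_inj->. Qed.

Lemma adj_sym k (F : bgraph k) : symmetric (adj F).
Proof. by move=> x y; rewrite /adj orbC. Qed.

Lemma quot_of_intro k (V : finType) (A R : rel V) (H : bgraph k) (h : V -> bV H) :
  (forall p, exists a, h a = p) ->
  (forall a b, h a = h b <-> a = b \/ R a b) ->
  (forall p q, adj H p q -> exists a b, [/\ h a = p, h b = q & A a b]) ->
  (forall a b, A a b -> adj H (h a) (h b)) ->
  quot_of A R h.
Proof.
move=> h_surj h_ker adj_preim A_adj; split=> // [a b|p q].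
  apply/eqP/idP; first by case/h_ker=> [->|Rab]; [apply: connect0 | apply: connect1].
  case/connectP=> s; elim: s a => [|c s IHs] a /= => [_ -> //|].
  by case/andP=> Rac path_s last_s; rewrite (proj2 (h_ker a c) (or_intror Rac)) (IHs c).
split=> [/adj_preim[a [b [<- <- ab]]] | [a [b [<- <- /orP[/A_adj //|/A_adj]]]]].
  by exists a, b; rewrite ab.
by rewrite adj_sym.
Qed.

Lemma sum_adj_inl k (F F' : bgraph k) x y : sum_adj F F' (inl x) (inl y) = adj F x y.
Proof. by []. Qed.

Lemma sum_adj_inr k (F F' : bgraph k) x y : sum_adj F F' (inr x) (inr y) = adj F' x y.
Proof. by []. Qed.

Section Ladder.

Variable k : nat.

(* Position p < k of C_k and M_k is the cell (0, p), position k + j the cell (1, j). *)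
Definition pos_cell (p : 'I_(k + k)) : 'I_2 * 'I_k :=
  match split p with inl i => (ord0, i) | inr i => (ord_max, i) end.

Definition cell_pos (c : 'I_2 * 'I_k) : 'I_(k + k) :=
  if c.1 == ord0 then lshift k c.2 else rshift k c.2.

Lemma pos_cellP (p : 'I_(k + k)) :
  ((pos_cell p).1 = 0 :> nat /\ (pos_cell p).2 = p :> nat)
  \/ ((pos_cell p).1 = 1 :> nat /\ (pos_cell p).2 + k = p :> nat).
Proof. by rewrite /pos_cell; case: splitP => j /= ->; [left | right; rewrite addnC]. Qed.

Lemma cell_posP (c : 'I_2 * 'I_k) :
  (c.1 = 0 :> nat /\ cell_pos c = c.2 :> nat) \/ (c.1 = 1 :> nat /\ cell_pos c = k + c.2 :> nat).
Proof. by case: c => [[[|[|r]] r_lt2] j]; [left | right |]. Qed.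

Lemma cell_posK : cancel cell_pos pos_cell.
Proof.
move=> c; have := pos_cellP (cell_pos c); have := cell_posP c.
have := ltn_ord c.2; have := ltn_ord (pos_cell (cell_pos c)).2.
by move=> *; apply: ord_pair_eq; lia.
Qed.

Lemma pos_cell_inj : injective pos_cell.
Proof.
by move=> p q pq; apply: ord_inj; have := pos_cellP p; have := pos_cellP q; rewrite pq; lia.
Qed.

Lemma adj_M_pos_cell x y : adj (M_bg k) x y -> grid_rel 2 k (pos_cell x) (pos_cell y).
Proof.
rewrite /adj /= /Medge /grid_rel => Mxy; have := pos_cellP x; have := pos_cellP y.
by have := ltn_ord (pos_cell x).2; have := ltn_ord (pos_cell y).2; lia.
Qed.

Lemma adj_C_pos_cell x y : adj (C_bg k) x y -> grid_rel 2 k (pos_cell x) (pos_cell y).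
Proof.
rewrite /adj /= /Cedge /grid_rel => Cxy; have := pos_cellP x; have := pos_cellP y.
have := ltn_ord (pos_cell x).2; have := ltn_ord (pos_cell y).2.
by have := ltn_ord x; have := ltn_ord y; lia.
Qed.

Lemma Cedge_succ (x y : 'I_(k + k)) : y = x.+1 :> nat -> x.+1 != k -> Cedge k x y.
Proof. by move=> yE xk; rewrite /Cedge yE eqxx xk -yE neq_ltn ltn_ord. Qed.

Lemma grid_rel_row_adj_C (c d : 'I_2 * 'I_k) :
  c.1 = d.1 :> nat -> grid_rel 2 k c d -> adj (C_bg k) (cell_pos c) (cell_pos d).
Proof.
rewrite /grid_rel /adj /= => row_cd cd; have := cell_posP c; have := cell_posP d.
have := ltn_ord c.2; have := ltn_ord d.2 => c_lt d_lt dP cP.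
have [d_succ|c_succ] : d.2 = c.2.+1 :> nat \/ c.2 = d.2.+1 :> nat by lia.
- by rewrite Cedge_succ //; lia.
- by rewrite orbC Cedge_succ //; lia.
Qed.

Lemma grid_rel_col_adj_M (c d : 'I_2 * 'I_k) :
  c.1 != d.1 :> nat -> grid_rel 2 k c d -> adj (M_bg k) (cell_pos c) (cell_pos d).
Proof.
rewrite /adj /= /Medge /grid_rel => row_cd cd.
by have := cell_posP c; have := cell_posP d; lia.
Qed.

Definition ladder_cell (a : 'I_(k + k) + 'I_(k + k)) : 'I_2 * 'I_k :=
  pos_cell (match a with inl x | inr x => x end).

Lemma ladder_cell_eqP a b : ladder_cell a = ladder_cell b <-> a = b \/
  sym_rel (fun a b => [exists i, ((a == inl (lshift k i)) && (b == inr (lshift k i)))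
                               || ((a == inl (rshift k i)) && (b == inr (rshift k i)))]) a b.
Proof.
split; last by case=> [->|/orP[]/existsP[i /orP[]/andP[/eqP-> /eqP->]]].
move/pos_cell_inj; case: a b => x [] y /= <-;
  [by left | right; apply/orP; left | right; apply/orP; right | by left].
all: by apply/existsP; case: (split_ordP x) => i ->; exists i; rewrite !eqxx ?orbT.
Qed.

Lemma grid_rel_ladder_preim (c d : 'I_2 * 'I_k) : grid_rel 2 k c d ->
  exists a b, [/\ ladder_cell a = c, ladder_cell b = d & sum_adj (M_bg k) (C_bg k) a b].
Proof.
move=> cd; have [row_cd|row_cd] := eqVneq (c.1 : nat) d.1.
  exists (inr (cell_pos c)), (inr (cell_pos d)); rewrite /ladder_cell !cell_posK.
  by rewrite sum_adj_inr grid_rel_row_adj_C.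
exists (inl (cell_pos c)), (inl (cell_pos d)); rewrite /ladder_cell !cell_posK.
by rewrite sum_adj_inl grid_rel_col_adj_M.
Qed.

Lemma sum_adj_ladder_cell a b :
  sum_adj (M_bg k) (C_bg k) a b -> grid_rel 2 k (ladder_cell a) (ladder_cell b).
Proof. by case: a b => x [] y //; [move/adj_M_pos_cell | move/adj_C_pos_cell]. Qed.

End Ladder.

Lemma parallel_M_C k : is_parallel (M_bg k) (C_bg k) (grid_bg k 1).
Proof.
exists (ladder_cell k); split; last 2 first.
- by move=> i; rewrite /ladder_cell /= -[lshift k i]/(cell_pos k (ord0, i)) cell_posK.
- by move=> i; rewrite /ladder_cell /= -[rshift k i]/(cell_pos k (ord_max, i)) cell_posK.
apply: quot_of_intro.
- by move=> c; exists (inl (cell_pos k c)); rewrite /ladder_cell cell_posK.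
- exact: ladder_cell_eqP.
- by move=> c d; rewrite adj_grid_bg; apply: grid_rel_ladder_preim.
- by move=> a b /sum_adj_ladder_cell; rewrite adj_grid_bg.
Qed.

Section Stack.

Variables k n : nat.

Definition glue (a : ('I_2 * 'I_k) + ('I_n.+1 * 'I_k)) : 'I_n.+2 * 'I_k :=
  match a with
  | inl c => (widen_ord (isT : 2 <= n.+2) c.1, c.2)
  | inr c => (lift ord0 c.1, c.2)
  end.

Lemma grid_rel_glue_inl c d : grid_rel n.+2 k (glue (inl c)) (glue (inl d)) = grid_rel 2 k c d.
Proof. by []. Qed.

Lemma grid_rel_glue_inr c d :
  grid_rel n.+2 k (glue (inr c)) (glue (inr d)) = grid_rel n.+1 k c d.
Proof. by []. Qed.

Lemma glue_inl_low (p : 'I_n.+2 * 'I_k) : p.1 <= 1 -> glue (inl (inord p.1, p.2)) = p.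
Proof. by move=> p_low; apply: ord_pair_eq => //=; rewrite inordK. Qed.

Lemma glue_inr_high (p : 'I_n.+2 * 'I_k) : 0 < p.1 -> glue (inr (inord p.1.-1, p.2)) = p.
Proof.
by move=> p_high; apply: ord_pair_eq => //=; rewrite /bump inordK; have := ltn_ord p.1; lia.
Qed.

Lemma glue_eqP a b : glue a = glue b <->
  a = b \/ sym_rel (fun a b => [exists i, (a == inl (ord_max, i)) && (b == inr (ord0, i))]) a b.
Proof.
split; last first.
  by case=> [->|/orP[]/existsP[i /andP[/eqP-> /eqP->]]] //; apply: ord_pair_eq.
case: a b => [[x1 x2]|[x1 x2]] [[y1 y2]|[y1 y2]] glue_ab.
all: have /= e1 := congr1 (fun p => nat_of_ord p.1) glue_ab.
all: have /= e2 := congr1 (fun p => nat_of_ord p.2) glue_ab.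
all: have := ltn_ord y1; have := ltn_ord x1; rewrite /bump in e1 * => x1_lt y1_lt.
1,4: by left; f_equal; apply: ord_pair_eq => /=; lia.
- right; apply/orP; left; apply/existsP; exists x2.
  by apply/andP; split; apply/eqP; f_equal; apply: ord_pair_eq => /=; lia.
- right; apply/orP; right; apply/existsP; exists y2.
  by apply/andP; split; apply/eqP; f_equal; apply: ord_pair_eq => /=; lia.
Qed.

Lemma grid_rel_glue_preim (p q : 'I_n.+2 * 'I_k) : grid_rel n.+2 k p q ->
  exists a b, [/\ glue a = p, glue b = q & sum_adj (grid_bg k 1) (grid_bg k n) a b].
Proof.
move=> pq; have [/andP[p_low q_low]|high] := boolP ((p.1 <= 1) && (q.1 <= 1)).
  exists (inl (inord p.1, p.2)), (inl (inord q.1, q.2)).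
  split; [exact: glue_inl_low | exact: glue_inl_low |].
  by rewrite sum_adj_inl adj_grid_bg -grid_rel_glue_inl !glue_inl_low.
have [p_high q_high] : 0 < p.1 /\ 0 < q.1 by move: pq high; rewrite /grid_rel; lia.
exists (inr (inord p.1.-1, p.2)), (inr (inord q.1.-1, q.2)).
split; [exact: glue_inr_high | exact: glue_inr_high |].
by rewrite sum_adj_inr adj_grid_bg -grid_rel_glue_inr !glue_inr_high.
Qed.

Lemma sum_adj_glue a b :
  sum_adj (grid_bg k 1) (grid_bg k n) a b -> grid_rel n.+2 k (glue a) (glue b).
Proof.
case: a b => c [] d //.
- by rewrite sum_adj_inl adj_grid_bg grid_rel_glue_inl.
- by rewrite sum_adj_inr adj_grid_bg grid_rel_glue_inr.
Qed.

Lemma series_grid : is_series (grid_bg k 1) (grid_bg k n) (grid_bg k n.+1).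
Proof.
exists glue; split; last 2 first.
1,2: by move=> i; apply: ord_pair_eq.
apply: quot_of_intro.
- move=> p; have [p_low|p_high] := leqP p.1 1.
    by exists (inl (inord p.1, p.2)); apply: glue_inl_low.
  by exists (inr (inord p.1.-1, p.2)); apply: glue_inr_high (ltnW p_high).
- exact: glue_eqP.
- by move=> p q; rewrite adj_grid_bg; apply: grid_rel_glue_preim.
- by move=> a b /sum_adj_glue; rewrite adj_grid_bg.
Qed.

End Stack.

Lemma Pk_grid_bg k n : Pk (grid_bg k n.+1).
Proof.
have Pk_two_rows : Pk (grid_bg k 1).
  by apply: Pk_par (parallel_M_C k); [apply/Pk_QS/bminor_refl | apply: bminor_refl].
by elim: n => [|n IHn] //; apply: Pk_series Pk_two_rows IHn (series_grid k n.+1).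
Qed.

Lemma edge_contr_C1 : edge_contr (C_bg 1) (grid_bg 1 0).
Proof.
have I2 (x : 'I_(1 + 1)) : x = ord0 \/ x = ord_max.
  by case: x => [[|[|x]] ?] //; [left | right]; apply: val_inj.
exists ord0, ord_max; split=> //; exists (fun=> (ord0, ord0)); split; last 2 first.
1,2: by move=> i; apply: ord_pair_eq => //=; rewrite [i]ord1.
apply: quot_of_intro.
- by move=> [i j]; exists ord0; rewrite [i]ord1 [j]ord1.
- by move=> a b; split=> // _; case: (I2 a) => ->; case: (I2 b) => ->; [left | right | right | left].
- by move=> [i j] [i' j']; rewrite adj_grid_bg [i]ord1 [j]ord1 [i']ord1 [j']ord1.
- by move=> a b; case: (I2 a) => ->; case: (I2 b) => ->.
Qed.

Lemma Pk_grid_1x1 : Pk (grid_bg 1 0).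
Proof.
apply/Pk_QP; apply: bminor_step (bminor_refl _) _.
by right; left; apply: edge_contr_C1.
Qed.

Lemma grid_bg_width0 n : underlying_is_grid (grid_bg 0 n).
Proof.
exists (fun p => (p.2, p.2)); split; last by case=> ? [].
by exists (fun q => (ord0, q.1)); case=> ? [].
Qed.

Lemma grid_bg_square m : underlying_is_grid (grid_bg m.+1 m).
Proof. by exists id; split; [exists id | move=> x y; rewrite adj_grid_bg]. Qed.

Theorem lemma4p10 (k : nat) : exists F : bgraph k, Pk F /\ underlying_is_grid F.
Proof.
case: k => [|m].
  by exists (grid_bg 0 1); split; [exact: Pk_grid_bg | exact: grid_bg_width0].
exists (grid_bg m.+1 m); split; last exact: grid_bg_square.
by case: m => [|m]; [exact: Pk_grid_1x1 | exact: Pk_grid_bg].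
Qed.
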